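(* Fix a single machine with nonnegative real parameters $k^A,k^B,t^A,t^B$, a real bound $L$ and nonnegative integers $n_a,n_b$. For $0\le a\le n_a$, $0\le b\le n_b$ let $F(a,b)=1$ if $f(a,b)\le L$ and $F(a,b)=0$ otherwise, where $f$ is as in the context. Then, whenever all entries of $F$ mentioned below lie in the range $0\le a\le n_a$, $0\le b\le n_b$: (1) if $b\le a+1$ and $F(a,b)=0$, then $F(a+1,b)=0$; (2) if $b\ge a+1$ and $F(a,b)=0$, then $F(a,b+1)=0$; (3) if $F(a,a+1)=0$, then $F(a+1,a+2)=0$; (4) if $F(a+1,a+1)=0$ and $F(a+1,a+2)=1$, then $F(a,a+1)=1$.
   Context: A machine processes jobs of two types, A and B, in batches. A schedule for the task-combination $(a,b)$ is a finite sequence of batches, each a nonempty group of jobs of a single type, with consecutive batches of different types, processing exactly $a$ A-jobs and $b$ B-jobs in total. An A-batch of $x$ jobs takes $t^A+k^A x^2$ time units, a B-batch of $x$ jobs takes $t^B+k^B x^2$ time units; the time of a schedule is the sum of its batch times (empty schedule: time $0$). $f(a,b)$ is the minimum time over all schedules for $(a,b)$. *)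

From HB Require Import structures.
From mathcomp Require Import all_boot all_order all_algebra.
From mathcomp Require Import boolp classical_sets reals.
Set Implicit Arguments. Unset Strict Implicit. Unset Printing Implicit Defensive.
Import Order.TTheory GRing.Theory Num.Theory.
Local Open Scope ring_scope.
Local Open Scope classical_set_scope.

(* A batch is (typ, x): typ = true for an A-batch, false for a B-batch;
   x = number of jobs in it.  A schedule is a finite sequence of batches. *)
Definition batch := (bool * nat)%type.

Definition is_schedule (a b : nat) (s : seq batch) : Prop :=
  [/\ all (fun x => 0 < x.2)%N s,
      sorted (fun x y : batch => x.1 != y.1) s,
      sumn [seq x.2 | x <- s & x.1] = a
    & sumn [seq x.2 | x <- s & ~~ x.1] = b].

Section Machine.
Variables (R : realType) (kA kB tA tB : R).

Definition batch_time (x : batch) : R :=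
  if x.1 then tA + kA * (x.2%:R) ^+ 2 else tB + kB * (x.2%:R) ^+ 2.

Definition sched_time (s : seq batch) : R := \sum_(x <- s) batch_time x.

(* f(a,b): minimum time over all schedules for (a,b); the set of schedules
   is finite and nonempty, so the minimum is its infimum. *)
Definition fmin (a b : nat) : R :=
  inf [set sched_time s | s in is_schedule a b].

Definition Fb (L : R) (a b : nat) : bool := fmin a b <= L.
End Machine.

From HB Require Import structures.
From mathcomp Require Import all_boot all_order all_algebra.
From mathcomp Require Import boolp classical_sets reals.
From mathcomp Require Import zify.

Set Implicit Arguments.
Unset Strict Implicit.
Unset Printing Implicit Defensive.

Import Order.TTheory GRing.Theory Num.Theory.
Local Open Scope ring_scope.

(* Deleting one job of a type t from a schedule in which t-jobs are at least
   as numerous as the other jobs never increases its time.  If some t-batch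
   has two or more jobs, shrink it: batch times grow with the batch size.
   Otherwise every t-batch is a singleton; since batch types alternate, if
   both end batches had the other type there would be more jobs of the other
   type than t-jobs, so an end batch is a single t-job and can be deleted.
   Hence f(a,b) <= f(a+1,b) for b <= a+1 and f(a,b) <= f(a,b+1) for
   a <= b+1, and all four claims follow from these two inequalities. *)

Definition jobs (t : bool) (s : seq batch) : nat :=
  sumn [seq x.2 | x <- s & x.1 == t].

Definition valid_schedule (s : seq batch) : bool :=
  all (fun x : batch => 0 < x.2)%N s && sorted (fun x y : batch => x.1 != y.1) s.

Lemma jobs_cat t s1 s2 : jobs t (s1 ++ s2) = (jobs t s1 + jobs t s2)%N.
Proof. by rewrite /jobs filter_cat map_cat sumn_cat. Qed.

Lemma jobs_cons t x s : jobs t (x :: s) = ((if x.1 == t then x.2 else 0) + jobs t s)%N.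
Proof. by rewrite /jobs /=; case: eqP. Qed.

Lemma is_scheduleE a b s :
  is_schedule a b s <-> [/\ valid_schedule s, jobs true s = a & jobs false s = b].
Proof.
have -> : jobs true s = sumn [seq x.2 | x <- s & x.1].
  by congr (sumn (map _ _)); apply: eq_filter => x; rewrite eqb_id.
have -> : jobs false s = sumn [seq x.2 | x <- s & ~~ x.1].
  by congr (sumn (map _ _)); apply: eq_filter => x; rewrite eqbF_neg.
by split => [[pos alt <- <-]|[/andP [pos alt] <- <-]]; split => //; apply/andP.
Qed.

Lemma schedule_exists a b : exists s, is_schedule a b s.
Proof.
exists [seq x <- [:: (true, a); (false, b)] | (0 < x.2)%N].
by case: a => [|a]; case: b => [|b]; split => //=; rewrite ?addn0.
Qed.

Lemma valid_schedule_cat s1 s2 :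
  valid_schedule (s1 ++ s2) -> valid_schedule s1 && valid_schedule s2.
Proof.
by rewrite /valid_schedule all_cat => /andP [/andP [-> ->] /cat_sorted2 [-> ->]].
Qed.

Lemma count_alternating (b : bool) (q : seq bool) :
  sorted (fun u v => u != v) (b :: q) ->
  count_mem b (b :: q) = (count_mem (~~ b) (b :: q) + (last b q == b))%N.
Proof.
elim: q b => [|c q IH] b /=; first by case: b.
move=> /andP [/negPf bc alt_cq]; have := IH c alt_cq.
by case: b c bc {IH alt_cq} => -[] //= _; case: last => /=; lia.
Qed.

Definition large_batch (t : bool) (x : batch) : bool := (x.1 == t) && (1 < x.2)%N.

Lemma count_le_jobs t s :
  all (fun x : batch => 0 < x.2)%N s -> (count_mem t (map fst s) <= jobs t s)%N.
Proof.
elim: s => [|x s IH] //= /andP [x_pos s_pos]; rewrite jobs_cons.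
by have := IH s_pos; case: eqP => /=; lia.
Qed.

Lemma jobs_no_large t s :
  all (fun x : batch => 0 < x.2)%N s -> ~~ has (large_batch t) s ->
  jobs t s = count_mem t (map fst s).
Proof.
elim: s => [|x s IH] //= /andP [x_pos s_pos]; rewrite negb_or jobs_cons.
case/andP => x_small /(IH s_pos) ->; move: x_small; rewrite /large_batch.
by case: eqP => /=; lia.
Qed.

Lemma large_batch_or_end t x s :
  valid_schedule (x :: s) -> (jobs (~~ t) (x :: s) <= jobs t (x :: s))%N ->
  [|| has (large_batch t) (x :: s), x.1 == t | (last x s).1 == t].
Proof.
case/andP => pos alt jobs_le; apply/norP => -[no_large /norP [/negPf xt /negPf lt]].
have x_nt : x.1 = ~~ t by move: xt; destruct x.1, t.
have l_nt : (last x s).1 = ~~ t by move: lt; destruct (last x s).1, t.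
have := @count_alternating x.1 (map fst s); rewrite -map_cons sorted_map last_map.
move=> /(_ alt); rewrite l_nt x_nt eqxx negbK addn1 => count_nt.
have := count_le_jobs (~~ t) pos; rewrite count_nt -jobs_no_large //; lia.
Qed.

Section ScheduleTime.
Variables (R : realType) (kA kB tA tB : R).
Hypotheses (kA_ge0 : 0 <= kA) (kB_ge0 : 0 <= kB) (tA_ge0 : 0 <= tA) (tB_ge0 : 0 <= tB).
Local Notation batch_time := (batch_time kA kB tA tB).
Local Notation sched_time := (sched_time kA kB tA tB).
Local Notation fmin := (fmin kA kB tA tB).

Lemma batch_time_ge0 x : 0 <= batch_time x.
Proof.
by rewrite /batch_time; case: x.1; rewrite addr_ge0 ?mulr_ge0 ?sqr_ge0.
Qed.

Lemma batch_time_le t m n : (m <= n)%N -> batch_time (t, m) <= batch_time (t, n).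
Proof.
move=> le_mn; rewrite /batch_time /=.
by case: t; rewrite lerD2l ler_wpM2l // -!natrX ler_nat leq_sqr.
Qed.

Lemma sched_time_cat s1 s2 : sched_time (s1 ++ s2) = sched_time s1 + sched_time s2.
Proof. exact: big_cat. Qed.

Lemma sched_time_cons x s : sched_time (x :: s) = batch_time x + sched_time s.
Proof. exact: big_cons. Qed.

Lemma sched_time_ge0 s : 0 <= sched_time s.
Proof. by apply: sumr_ge0 => x _; apply: batch_time_ge0. Qed.

Definition removes_job (t : bool) (s s' : seq batch) : Prop :=
  [/\ valid_schedule s', (jobs t s').+1 = jobs t s,
      jobs (~~ t) s' = jobs (~~ t) s & sched_time s' <= sched_time s].

Lemma shrink_large_batch t s1 x s2 :
  valid_schedule (s1 ++ x :: s2) -> large_batch t x ->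
  removes_job t (s1 ++ x :: s2) (s1 ++ (t, x.2.-1) :: s2).
Proof.
case/andP => pos alt /andP [/eqP <- x_large]; split.
- apply/andP; split.
    by move: pos; rewrite !all_cat /= => /and3P [-> _ ->]; rewrite andbT; lia.
  by move: alt; rewrite -!(@sorted_map _ _ fst (fun u v => u != v)) !map_cat.
- by rewrite !jobs_cat !jobs_cons /= eqxx; lia.
- by rewrite !jobs_cat !jobs_cons /=; case: (x.1).
- rewrite !sched_time_cat !sched_time_cons lerD2l lerD2r.
  by case: x {pos alt x_large} => u n; apply/batch_time_le/leq_pred.
Qed.

Lemma drop_unit_batch t s1 s2 :
  valid_schedule (s1 ++ s2) -> removes_job t (s1 ++ (t, 1%N) :: s2) (s1 ++ s2).
Proof.
move=> valid; split => //.
- by rewrite !jobs_cat jobs_cons /= eqxx; lia.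
- by rewrite !jobs_cat jobs_cons /=; case: t.
- by rewrite !sched_time_cat sched_time_cons lerD2l lerDr batch_time_ge0.
Qed.

Lemma remove_job t s :
  valid_schedule s -> (0 < jobs t s)%N -> (jobs (~~ t) s <= jobs t s)%N ->
  exists s', removes_job t s s'.
Proof.
case: s => [|x s] // valid _ jobs_le.
have [/hasP [y y_in y_large]|no_large] := boolP (has (large_batch t) (x :: s)).
  by case/splitPr: y_in valid => s1 s2 valid; eexists; apply: shrink_large_batch.
have unit_t y : y \in x :: s -> y.1 = t -> y = (t, 1%N).
  move=> y_in y_t; have /andP [/allP /(_ y y_in) y_pos _] := valid.
  have /hasPn /(_ y y_in) := no_large; rewrite /large_batch y_t eqxx /=.
  by case: y y_t y_pos {y_in} => u n /= -> ? ?; congr pair; lia.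
have := large_batch_or_end valid jobs_le; rewrite (negPf no_large) /=.
case/orP => [/eqP /(unit_t x (mem_head _ _)) x_unit|/eqP last_t].
  exists s; rewrite x_unit -cat1s in valid *.
  have /andP [_ valid_s] := valid_schedule_cat valid.
  exact: (@drop_unit_batch _ [::]).
exists (belast x s); move: valid.
rewrite lastI (unit_t _ (mem_last _ _) last_t) -cats1 => valid.
have /andP [valid_s _] := valid_schedule_cat valid.
by rewrite -[X in removes_job _ _ X]cats0; apply: drop_unit_batch; rewrite cats0.
Qed.

Lemma fmin_le a b s : is_schedule a b s -> fmin a b <= sched_time s.
Proof.
move=> sched; apply: ge_inf; last by exists s.
by exists 0 => _ [s' _ <-]; apply: sched_time_ge0.
Qed.

Lemma fmin_le_fmin a b a' b' :
  (forall s, is_schedule a' b' s ->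
     exists2 s', is_schedule a b s' & sched_time s' <= sched_time s) ->
  fmin a b <= fmin a' b'.
Proof.
move=> cheaper; apply: lb_le_inf.
  by have [s sched] := schedule_exists a' b'; exists (sched_time s), s.
move=> _ [s /cheaper [s' sched' le_s's] <-].
exact: le_trans (fmin_le sched') le_s's.
Qed.

Lemma fmin_le_succA a b : (b <= a.+1)%N -> fmin a b <= fmin a.+1 b.
Proof.
move=> le_ba; apply: fmin_le_fmin => s /is_scheduleE [valid jobsA jobsB].
have [||s' [valid' jobsA' jobsB' le_s's]] := remove_job (t := true) valid.
- by rewrite jobsA.
- by rewrite jobsA jobsB.
exists s' => //; apply/is_scheduleE; split=> //; first by apply/succn_inj; rewrite jobsA'.
by rewrite jobsB'.
Qed.

Lemma fmin_le_succB a b : (a <= b.+1)%N -> fmin a b <= fmin a b.+1.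
Proof.
move=> le_ab; apply: fmin_le_fmin => s /is_scheduleE [valid jobsA jobsB].
have [||s' [valid' jobsB' jobsA' le_s's]] := remove_job (t := false) valid.
- by rewrite jobsB.
- by rewrite jobsA jobsB.
exists s' => //; apply/is_scheduleE; split=> //; last by apply/succn_inj; rewrite jobsB'.
by rewrite jobsA'.
Qed.

Lemma fmin_le_succ_diag a : fmin a a.+1 <= fmin a.+1 a.+2.
Proof. exact: le_trans (fmin_le_succA (leqnn _)) (fmin_le_succB (leqnSn _)). Qed.
End ScheduleTime.

Theorem lemma4 (R : realType) (kA kB tA tB L : R) (na nb : nat)
  (hkA : 0 <= kA) (hkB : 0 <= kB) (htA : 0 <= tA) (htB : 0 <= tB) :
  let F := Fb kA kB tA tB L in
  [/\ (forall a b : nat, (a + 1 <= na)%N -> (b <= nb)%N ->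
         (b <= a + 1)%N -> F a b = false -> F (a + 1)%N b = false),
      (forall a b : nat, (a <= na)%N -> (b + 1 <= nb)%N ->
         (a + 1 <= b)%N -> F a b = false -> F a (b + 1)%N = false),
      (forall a : nat, (a + 1 <= na)%N -> (a + 2 <= nb)%N ->
         F a (a + 1)%N = false -> F (a + 1)%N (a + 2)%N = false)
    & (forall a : nat, (a + 1 <= na)%N -> (a + 2 <= nb)%N ->
         F (a + 1)%N (a + 1)%N = false -> F (a + 1)%N (a + 2)%N = true ->
         F a (a + 1)%N = true)].
Proof.
have succA := fmin_le_succA hkA hkB htA htB.
have succB := fmin_le_succB hkA hkB htA htB.
have succ_diag := fmin_le_succ_diag hkA hkB htA htB.
rewrite /Fb; split=> [a b _ _|a b _ _|a _ _|a _ _ _]; rewrite ?addn1 ?addn2.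
- by move=> le_ba; apply: contraFF; apply: le_trans (succA _ _ le_ba).
- by move=> lt_ab; apply: contraFF; apply: le_trans (succB _ _ (leqW (ltnW lt_ab))).
- by apply: contraFF; apply: le_trans (succ_diag a).
-
  exact: le_trans (succ_diag a).
Qed.
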